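(* Let $\Gamma$ be a finitely generated discrete group with finite symmetric generating set $Q$, let $Z\subseteq \mathrm{Sub}(\Gamma)$ be a uniformly recurrent subgroup of $\Gamma$, and let $H\in Z$. Then the groupoid $\mathcal{G}_H$ (defined in the context), equipped with its operations and topology, is an ample, minimal, Hausdorff, étale topological groupoid whose unit space $\mathcal{G}_H^0$ is homeomorphic to $Z$ (with the subspace topology from $\mathrm{Sub}(\Gamma)$).
   Context: Word length $l(\gamma)$ is taken with respect to $Q$. $\mathrm{Sub}(\Gamma)$ is the space of subgroups of $\Gamma$ with the topology of pointwise convergence of indicator functions, with $\Gamma$ acting by conjugation $\gamma.H=\gamma H\gamma^{-1}$. A uniformly recurrent subgroup (URS) is a nonempty closed $\Gamma$-invariant subset $Z\subseteq\mathrm{Sub}(\Gamma)$ on which every $\Gamma$-orbit is dense. For $H\le\Gamma$, the Schreier graph $S(H)=S_\Gamma^Q(H)$ is the rooted labeled graph with vertex set $\Gamma/H$, root $H$, and for each $\gamma H\in\Gamma/H$ and $q\in Q$ an edge from $\gamma H$ to $q\gamma H$ labeled $q$; $d$ is the shortest-path metric and $B_n(S,p)$ the ball of radius $n$ around a vertex $p$. Two rooted labeled balls are root-label isomorphic if there is a graph isomorphism between them preserving roots and labels (such an isomorphism is unique). Construction of $\mathcal{G}_H$: write $S=S(H)$. For $p\in\Gamma/H$ and $n\ge 0$ let $[p]_n$ be the root-label isomorphism class of the rooted labeled ball $(B_n(S,p),p)$, and let $E_n=\{[p]_n: p\in\Gamma/H\}$ (a finite discrete set), with maps $E_{n+1}\to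 E_n$, $[p]_{n+1}\mapsto[p]_n$. Let $\mathcal{G}_H^0=\varprojlim E_n$. For $x=(x_n)\in\mathcal{G}_H^0$ choose vertices $p_n\in\Gamma/H$ with $x_n=[p_n]_n$. The arrows of $\mathcal{G}_H$ are equivalence classes of pairs $(x,\gamma)$ with $x\in\mathcal{G}_H^0$, $\gamma\in\Gamma$, where $(x,\gamma)\sim(x,\gamma')$ iff $\gamma p_n=\gamma' p_n$ for all sufficiently large $n$ (this does not depend on the choices of $p_n$). Range $r(x,\gamma)=x$; source $s(x,\gamma)=\gamma.x$, where $(\gamma.x)_n=[\gamma p_{n+l(\gamma)}]_n$; product $(x,\gamma')(\gamma'.x,\gamma)=(x,\gamma\gamma')$; inverse $(x,\gamma)^{-1}=(\gamma.x,\gamma^{-1})$; units are $(x,e)$, identified with $x\in\mathcal{G}_H^0$. The topology on $\mathcal{G}_H$ is generated by the sets $U_{c,\gamma}=\{(x,\gamma): x_N=c\}$ for $N\in\mathbb{N}$, $c\in E_N$, $\gamma\in\Gamma$ with $l(\gamma)\le N$. Ample means étale with totally disconnected unit space; minimal means every orbit in the unit space is dense. *)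

From HB Require Import structures.
From mathcomp Require Import all_boot all_classical.
From mathcomp Require Import topology.
From Stdlib Require Import ClassicalEpsilon.

Unset Printing Implicit Defensive.

Local Open Scope classical_set_scope.

Record grp := Grp {
  gcar :> Type;
  gmul : gcar -> gcar -> gcar;
  ginv : gcar -> gcar;
  gone : gcar;
  gmulA : forall x y z, gmul x (gmul y z) = gmul (gmul x y) z;
  gmul1 : forall x, gmul gone x = x;
  gmulV : forall x, gmul (ginv x) x = gone
}.

Arguments gmul {g}.
Arguments ginv {g}.

Section GroupBasics.
Variable G : grp.

Definition prodw (w : seq G) : G := foldr (@gmul G) (gone G) w.

Definition word_in (Q : set G) (w : seq G) : Prop := forall q, List.In q w -> Q q.

Definition symmetric_set (Q : set G) : Prop := forall q, Q q -> Q (ginv q).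

(* Q generates G (Q symmetric, so every element is a product of letters of Q) *)
Definition generates (Q : set G) : Prop :=
  forall g : G, exists w, word_in Q w /\ prodw w = g.

Definition has_word_len (Q : set G) (g : G) (n : nat) : Prop :=
  exists w, word_in Q w /\ size w = n /\ prodw w = g.

Definition wlen (Q : set G) (g : G) : nat :=
  epsilon (inhabits 0%N)
    (fun n => has_word_len Q g n /\ forall m, has_word_len Q g m -> (n <= m)%N).

Definition is_subgroup (H : G -> bool) : Prop :=
  H (gone G) /\ forall x y, H x -> H y -> H (gmul x (ginv y)).

(* conjugation action  g.H = g H g^-1 :  d \in g H g^-1  iff  g^-1 d g \in H *)
Definition conj_sub (g : G) (H : G -> bool) : G -> bool :=
  fun d => H (gmul (ginv g) (gmul d g)).

End GroupBasics.
Arguments prodw {G}.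
Arguments word_in {G}.
Arguments symmetric_set {G}.
Arguments generates {G}.
Arguments has_word_len {G}.
Arguments wlen {G}.
Arguments is_subgroup {G}.
Arguments conj_sub {G}.

(* The space {0,1}^Gamma with the product (pointwise convergence) topology *)
Definition Ind (G : grp) := {ptws G -> bool}.

Definition SubG (G : grp) : set (Ind G) := [set H | is_subgroup H].

Definition URS {G : grp} (Z : set (Ind G)) : Prop :=
  Z !=set0 /\
  Z `<=` @SubG G /\
  (* closed in Sub(Gamma) for the subspace topology *)
  (exists C : set (Ind G), closed C /\ Z = C `&` @SubG G) /\
  (forall (g : G) (K : Ind G), Z K -> Z (conj_sub g K)) /\
  (forall K : Ind G, Z K -> Z `<=` closure (range (fun g : G => (conj_sub g K : Ind G)))).

(* Schreier graph S(H) with vertex set G/H; a vertex gH is represented  *)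
(* by any g.  Edges: gH --q--> q g H, for q in Q.                      *)
Section Schreier.
Variables (G : grp) (Q : set G) (H : G -> bool).

(* aH = bH *)
Definition ceq (a b : G) : Prop := H (gmul (ginv a) b).

(* there is a path of length <= n from aH to bH in S(H), i.e. d(aH,bH) <= n;
   the path with successive labels q_1,...,q_k ends at q_k ... q_1 a H *)
Definition sdist_le (n : nat) (a b : G) : Prop :=
  exists w : seq G, word_in Q w /\ (size w <= n)%N /\ ceq (gmul (prodw w) a) b.

Definition inball (n : nat) (p v : G) : Prop := sdist_le n p v.

(* the rooted labeled balls (B_n(S,pH), pH) and (B_n(S,p'H), p'H) are
   root-label isomorphic: a bijection phi of the vertex sets (acting on
   representatives) sending root to root and preserving labeled edges
   (the balls are induced subgraphs). *)
Definition ball_iso (n : nat) (p p' : G) : Prop :=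
  exists phi : G -> G,
    (forall v, inball n p v -> inball n p' (phi v)) /\
    (forall v w, inball n p v -> inball n p w -> (ceq v w <-> ceq (phi v) (phi w))) /\
    (forall v', inball n p' v' -> exists v, inball n p v /\ ceq (phi v) v') /\
    ceq (phi p) p' /\
    (forall q v w, Q q -> inball n p v -> inball n p w ->
       (ceq (gmul q v) w <-> ceq (gmul q (phi v)) (phi w))).

(* [p]_n : the root-label isomorphism class of (B_n(S,pH), pH), represented
   as the set of representatives p' of vertices with isomorphic rooted ball *)
Definition bcls (n : nat) (p : G) : set G := [set p' | ball_iso n p p'].

Definition En (n : nat) : set (set G) := [set c | exists p, c = bcls n p].

End Schreier.
Arguments ceq {G}.
Arguments sdist_le {G}.
Arguments inball {G}.
Arguments ball_iso {G}.
Arguments bcls {G}.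
Arguments En {G}.

(* G_H^0 = lim E_n : compatible sequences (x_n) with x_n in E_n and
   x_{n+1} |-> x_n under [p]_{n+1} |-> [p]_n *)
Record GH0 (G : grp) (Q : set G) (H : G -> bool) := MkGH0 {
  xs : nat -> set G;
  xs_ok : forall n, exists p, xs n.+1 = bcls Q H n.+1 p /\ xs n = bcls Q H n p
}.

Arguments xs {G Q H}.
Arguments MkGH0 {G Q H}.
HB.instance Definition _ G Q H := gen_eqMixin (@GH0 G Q H).
HB.instance Definition _ G Q H := gen_choiceMixin (@GH0 G Q H).

(* inverse limit topology of the discrete spaces E_n: generated by the
   cylinders {x | x_N = c}, c in E_N *)
Definition GH0_subbase G Q H : set (set (@GH0 G Q H)) :=
  [set U | exists (N : nat) (c : set G), En Q H N c /\ U = [set x | xs x N = c]].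

HB.instance Definition _ G Q H :=
  @isSubBaseTopological.Build (@GH0 G Q H) (set (@GH0 G Q H))
    (GH0_subbase G Q H) id.

Section GH.
Variables (G : grp) (Q : set G) (H : G -> bool).

Local Notation X := (@GH0 G Q H).

Definition GH0_default : X :=
  MkGH0 (fun n => bcls Q H n (gone G))
    (fun n => ex_intro _ (gone G) (conj erefl erefl)).

Definition xrep (x : X) (n : nat) : G :=
  epsilon (inhabits (gone G)) (fun p => xs x n = bcls Q H n p).

(* packaging a sequence as an element of G_H^0 (default if not compatible) *)
Definition toGH0 (f : nat -> set G) : X :=
  match pselect (forall n, exists p, f n.+1 = bcls Q H n.+1 p /\ f n = bcls Q H n p)
  with
  | left pf => MkGH0 f pf
  | right _ => GH0_default
  end.

Definition gact (g : G) (x : X) : X :=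
  toGH0 (fun n => bcls Q H n (gmul g (xrep x (n + wlen Q g)))).

Definition arr_rel (a b : X * G) : Prop :=
  a.1 = b.1 /\
  exists N, forall n, (N <= n)%N -> ceq H (gmul a.2 (xrep a.1 n)) (gmul b.2 (xrep a.1 n)).

End GH.
Arguments GH0_default {G}.
Arguments xrep {G Q H}.
Arguments toGH0 {G}.
Arguments gact {G Q H}.
Arguments arr_rel {G Q H}.

Record GH (G : grp) (Q : set G) (H : G -> bool) := MkGH {
  aset : set (@GH0 G Q H * G);
  aset_cls : exists a, aset = arr_rel a
}.

Arguments aset {G Q H}.
Arguments MkGH {G Q H}.
HB.instance Definition _ G Q H := gen_eqMixin (@GH G Q H).
HB.instance Definition _ G Q H := gen_choiceMixin (@GH G Q H).

Definition acls {G Q H} (a : @GH0 G Q H * G) : @GH G Q H :=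
  MkGH (arr_rel a) (ex_intro _ a erefl).

Definition GH_subbase G Q H : set (set (@GH G Q H)) :=
  [set U | exists (N : nat) (c : set G) (g : G),
     En Q H N c /\ (wlen Q g <= N)%N /\
     U = [set A | exists x, A = acls (x, g) /\ xs x N = c]].

HB.instance Definition _ G Q H :=
  @isSubBaseTopological.Build (@GH G Q H) (set (@GH G Q H))
    (GH_subbase G Q H) id.

Section GHops.
Variables (G : grp) (Q : set G) (H : G -> bool).
Local Notation X := (@GH0 G Q H).
Local Notation A := (@GH G Q H).

Definition arep (g : A) : X * G :=
  epsilon (inhabits (GH0_default Q H, gone G)) (fun a => aset g = arr_rel a).

Definition GH_r (g : A) : X := (arep g).1.
Definition GH_s (g : A) : X := gact (arep g).2 (arep g).1.
Definition GH_u (x : X) : A := acls (x, gone G).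
Definition GH_inv (g : A) : A := acls (GH_s g, ginv (arep g).2).
Definition GH_mul (a b : A) : A := acls (GH_r a, gmul (arep b).2 (arep a).2).

End GHops.
Arguments arep {G Q H}.
Arguments GH_r {G Q H}.
Arguments GH_s {G Q H}.
Arguments GH_u {G Q H}.
Arguments GH_inv {G Q H}.
Arguments GH_mul {G Q H}.

Definition topological_groupoid {X Y : topologicalType}
  (r s : Y -> X) (u : X -> Y) (inv : Y -> Y) (mul : Y -> Y -> Y) : Prop :=
  (forall x, r (u x) = x /\ s (u x) = x) /\
  (forall g h, s g = r h -> r (mul g h) = r g /\ s (mul g h) = s h) /\
  (forall g h k, s g = r h -> s h = r k -> mul (mul g h) k = mul g (mul h k)) /\
  (forall g, mul (u (r g)) g = g /\ mul g (u (s g)) = g) /\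
  (forall g, r (inv g) = s g /\ s (inv g) = r g /\
             mul g (inv g) = u (r g) /\ mul (inv g) g = u (s g)) /\
  continuous r /\ continuous s /\ continuous u /\ continuous inv /\
  {within [set gh : Y * Y | s gh.1 = r gh.2], continuous (fun gh : Y * Y => mul gh.1 gh.2)}.

Definition local_homeo {X Y : topologicalType} (f : X -> Y) : Prop :=
  forall g : X, exists U : set X,
    open U /\ U g /\ open (f @` U) /\
    (forall a b, U a -> U b -> f a = f b -> a = b) /\
    {within U, continuous f} /\
    (forall V, open V -> V `<=` U -> open (f @` V)).

Definition etale_groupoid {X Y : topologicalType}
  (r s : Y -> X) (u : X -> Y) (inv : Y -> Y) (mul : Y -> Y -> Y) : Prop :=
  topological_groupoid r s u inv mul /\ local_homeo r.

Definition ample_groupoid {X Y : topologicalType}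
  (r s : Y -> X) (u : X -> Y) (inv : Y -> Y) (mul : Y -> Y -> Y) : Prop :=
  etale_groupoid r s u inv mul /\ totally_disconnected [set: X].

Definition minimal_groupoid {X Y : topologicalType} (r s : Y -> X) : Prop :=
  forall x : X, closure [set s g | g in [set g | r g = x]] = [set: X].

Definition homeomorphic_to_subspace (X Y : topologicalType) (Z : set Y) : Prop :=
  exists f : X -> Y,
    injective f /\ range f = Z /\ continuous f /\
    (forall U : set X, open U -> exists V : set Y, open V /\ f @` U = V `&` Z).

From HB Require Import structures.
From mathcomp Require Import all_boot all_classical.
From mathcomp Require Import topology zify.
From Stdlib Require Import ClassicalEpsilon.

(* The rooted ball of radius n about the vertex pH of the Schreier graph S(H) determines, and
   is determined by, which elements of word length at most 2n+1 fix pH, i.e. lie in p H p^-1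
   ([ball_iso_agree], [agree_ball_iso]).  Hence a point x = ([p_n]_n) of G_H^0 amounts to the
   subgroup [stab x], the pointwise limit of the p_n H p_n^-1; cylinders of G_H^0 become basic
   open sets of Sub(G), and since Z is the orbit closure of H these limits are exactly the
   points of Z.  In these terms g.x is conjugation by g and (x,g) = (x,g') iff g^-1 g' lies in
   [stab x].  So r is injective on every basic set U_{c,g}, two arrows are separated by such
   clopen conditions, G_H^0 has a clopen base of cylinders, and orbits are dense because
   every orbit of Z is. *)

Local Open Scope classical_set_scope.

Section GroupTheory.
Context {G : grp}.
Local Infix "**" := (@gmul G) (at level 40, left associativity).
Local Notation e := (gone G).
Local Notation gmulA := (@gmulA G).
Local Notation gmul1 := (@gmul1 G).
Local Notation gmulV := (@gmulV G).

Lemma gmulgV (x : G) : x ** ginv x = e.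
Proof.
have idem : (x ** ginv x) ** (x ** ginv x) = x ** ginv x.
  by rewrite -gmulA (gmulA (ginv x)) gmulV gmul1.
have := congr1 (fun z => ginv (x ** ginv x) ** z) idem.
by rewrite /= gmulA gmulV gmul1.
Qed.

Lemma gmulg1 (x : G) : x ** e = x.
Proof. by rewrite -(gmulV x) gmulA gmulgV gmul1. Qed.

Lemma ginv_uniq (a b : G) : a ** b = e -> a = ginv b.
Proof. by move=> ab1; rewrite -(gmulg1 a) -(gmulgV b) gmulA ab1 gmul1. Qed.

Lemma ginvK (x : G) : ginv (ginv x) = x.
Proof. by apply/esym/ginv_uniq; rewrite gmulgV. Qed.

Lemma ginvM (x y : G) : ginv (x ** y) = ginv y ** ginv x.
Proof. by apply/esym/ginv_uniq; rewrite -gmulA (gmulA (ginv x)) gmulV gmul1 gmulV. Qed.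

Lemma ginv1 : ginv e = e.
Proof. by apply/esym/ginv_uniq; rewrite gmul1. Qed.

Lemma gmulKg (x y : G) : ginv x ** (x ** y) = y.
Proof. by rewrite gmulA gmulV gmul1. Qed.

Lemma gmulKVg (x y : G) : x ** (ginv x ** y) = y.
Proof. by rewrite gmulA gmulgV gmul1. Qed.

Lemma gmulgK (x y : G) : (y ** x) ** ginv x = y.
Proof. by rewrite -gmulA gmulgV gmulg1. Qed.

Lemma gmulgKV (x y : G) : (y ** ginv x) ** x = y.
Proof. by rewrite -gmulA gmulV gmulg1. Qed.

Lemma conj_subgroup (K : G -> bool) g : is_subgroup K -> is_subgroup (conj_sub g K).
Proof.
move=> [K1 KB]; split; first by rewrite /conj_sub gmul1 gmulV.
move=> x y Kx Ky; have := KB _ _ Kx Ky.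
by rewrite /conj_sub !ginvM !ginvK !gmulA gmulgK.
Qed.

Section Subgroup.
Context {K : G -> bool}.
Hypothesis subK : is_subgroup K.

Lemma subgroup1 : K e. Proof. by case: subK. Qed.

Lemma subgroupV {x} : K x -> K (ginv x).
Proof. by move=> Kx; have := subK.2 _ _ subgroup1 Kx; rewrite gmul1. Qed.

Lemma subgroupVE x : K (ginv x) = K x.
Proof. by apply/idP/idP => /subgroupV //; rewrite ginvK. Qed.

Lemma subgroupM {x y} : K x -> K y -> K (x ** y).
Proof. by move=> Kx Ky; have := subK.2 _ _ Kx (subgroupV Ky); rewrite ginvK. Qed.

Lemma subgroupMl {x} y : K x -> K (x ** y) = K y.
Proof.
move=> Kx; apply/idP/idP => [Kxy|/(subgroupM Kx)//].
by have := subgroupM (subgroupV Kx) Kxy; rewrite gmulKg.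
Qed.

Lemma subgroupJ k d : K k -> K (ginv k ** (d ** k)) = K d.
Proof.
move=> Kk; rewrite subgroupMl ?subgroupV //.
apply/idP/idP => [Kdk|Kd]; last exact: subgroupM.
by have := subgroupM Kdk (subgroupV Kk); rewrite gmulgK.
Qed.

Lemma ceq_refl a : ceq K a a.
Proof. by rewrite /ceq gmulV subgroup1. Qed.

Lemma ceq_sym {a b} : ceq K a b -> ceq K b a.
Proof. by rewrite /ceq -subgroupVE ginvM ginvK. Qed.

Lemma ceq_trans {a b c} : ceq K a b -> ceq K b c -> ceq K a c.
Proof. by move=> ab bc; have := subgroupM ab bc; rewrite -gmulA gmulKVg. Qed.

Lemma ceq_congr {a a' b b'} : ceq K a a' -> ceq K b b' -> ceq K a b <-> ceq K a' b'.
Proof.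
move=> aa' bb'; split=> [ab|a'b'].
  exact: ceq_trans (ceq_trans (ceq_sym aa') ab) bb'.
exact: ceq_trans (ceq_trans aa' a'b') (ceq_sym bb').
Qed.

End Subgroup.

Lemma ceq_mull (K : G -> bool) c a b : ceq K (c ** a) (c ** b) = ceq K a b.
Proof. by rewrite /ceq ginvM -gmulA gmulKg. Qed.

End GroupTheory.

Section Words.
Context {G : grp} {Q : set G}.
Hypotheses (Qsym : symmetric_set Q) (Qgen : generates Q).
Local Infix "**" := (@gmul G) (at level 40, left associativity).
Local Notation e := (gone G).

Lemma prodw_cat w1 w2 : prodw (w1 ++ w2) = prodw w1 ** prodw w2.
Proof. by elim: w1 => [|q w IH] /=; rewrite ?gmul1 // IH gmulA. Qed.

Lemma word_in_cons q w : word_in Q (q :: w) <-> Q q /\ word_in Q w.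
Proof.
split=> [Qqw|[Qq Qw] r /= [<-//|/Qw//]].
by split=> [|r rw]; apply: Qqw; [left|right].
Qed.

Lemma word_in_cat w1 w2 : word_in Q (w1 ++ w2) <-> word_in Q w1 /\ word_in Q w2.
Proof.
elim: w1 => [|q w IH] /=; first by split=> [|[]//]; split=> // r [].
rewrite !word_in_cons IH; tauto.
Qed.

Lemma prodw_rev_inv w : prodw (rev (map (@ginv G) w)) = ginv (prodw w).
Proof.
elim: w => [|q w IH] /=; first by rewrite ginv1.
by rewrite rev_cons -cats1 prodw_cat IH /= gmulg1 ginvM.
Qed.

Lemma word_in_rev_inv w : word_in Q w -> word_in Q (rev (map (@ginv G) w)).
Proof.
elim: w => [|q w IH] //= /word_in_cons [Qq Qw].
rewrite rev_cons -cats1; apply/word_in_cat; split; first exact: IH.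
by apply/word_in_cons; split; [exact: Qsym|move=> r []].
Qed.

Lemma wlenP g : has_word_len Q g (wlen Q g) /\
  forall m, has_word_len Q g m -> wlen Q g <= m.
Proof.
pose minimal n := has_word_len Q g n /\ forall m, has_word_len Q g m -> n <= m.
suff: exists n, minimal n by apply: epsilon_spec.
have [w [Qw wg]] := Qgen g.
have [|m hm m_min] := @ex_minnP (fun m => `[< has_word_len Q g m >]).
  by exists (size w); apply/asboolP; exists w.
by exists m; split=> [|k hk]; [exact/asboolP|apply/m_min/asboolP].
Qed.

Lemma wlen_word {w} : word_in Q w -> wlen Q (prodw w) <= size w.
Proof. by move=> Qw; apply: (wlenP _).2; exists w. Qed.

Lemma wlen1 : wlen Q e = 0.
Proof. by apply/eqP; rewrite -leqn0; apply: (@wlen_word [::]) => ? []. Qed.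

Lemma wlen_gen {q} : Q q -> wlen Q q <= 1.
Proof.
move=> Qq; have := @wlen_word [:: q]; rewrite /= gmulg1; apply.
by apply/word_in_cons; split=> // ? [].
Qed.

Lemma wlenM x y : wlen Q (x ** y) <= wlen Q x + wlen Q y.
Proof.
have [[wx [Qwx [<- <-]]] _] := wlenP x; have [[wy [Qwy [<- <-]]] _] := wlenP y.
by rewrite -prodw_cat -size_cat; apply/wlen_word/word_in_cat.
Qed.

Lemma wlenV x : wlen Q (ginv x) <= wlen Q x.
Proof.
have [[w [Qw [<- <-]]] _] := wlenP x.
rewrite -prodw_rev_inv -(size_map (@ginv G)) -size_rev.
exact/wlen_word/word_in_rev_inv.
Qed.

Lemma wlenJ g d : wlen Q (ginv g ** (d ** g)) <= wlen Q d + (wlen Q g).*2.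
Proof.
have := wlenM (ginv g) (d ** g); have := wlenM d g; have := wlenV g; lia.
Qed.

Definition agree (k : nat) (A B : G -> bool) := forall d, wlen Q d <= k -> A d = B d.

Lemma agree_refl k A : agree k A A. Proof. by []. Qed.

Lemma agree_sym {k A B} : agree k A B -> agree k B A.
Proof. by move=> AB d /AB ->. Qed.

Lemma agree_trans {k A B C} : agree k A B -> agree k B C -> agree k A C.
Proof. by move=> AB BC d dk; rewrite AB // BC. Qed.

Lemma agree_le {k k' A B} : k <= k' -> agree k' A B -> agree k A B.
Proof. by move=> kk' AB d dk; apply: AB; apply: leq_trans kk'. Qed.

End Words.

Arguments agree {G} Q k A B.

Lemma ptws_cvg {T : Type} {F : set_system {ptws T -> bool}} (FF : Filter F)
    (f : {ptws T -> bool}) :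
  (forall d, \forall g \near F, g d = f d) -> F --> f.
Proof.
move=> Ff; apply/cvg_sup => d U [V] [[W] oW <-] WfN WU.
by apply: filterS WU _; apply: filterS (Ff d) => g gd /=; rewrite /= gd.
Qed.

Lemma ptws_nbhs_eval {T : Type} (f : {ptws T -> bool}) d :
  nbhs f [set g : {ptws T -> bool} | g d = f d].
Proof.
have /cvg_sup/(_ d) evalf := @cvg_id _ (nbhs f); apply: (evalf [set g | g d = f d]).
exists [set g | g d = f d] => //; split=> //.
by exists [set f d]; [exact: discrete_open|].
Qed.

Lemma finI_from_nested (T : Type) (D : set (set T)) (R : nat -> set T) (x : T) :
    (forall m n, m <= n -> R n `<=` R m) ->
    (forall i, D i -> i x -> exists M, R M `<=` i) ->
  forall A, finI_from D id A -> A x -> exists M, R M `<=` A.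
Proof.
move=> Rdecr DR A [F FD <-] Fx.
have nested (s : seq (set T)) :
    (forall i, i \in s -> D i /\ i x) -> exists M, forall i, i \in s -> R M `<=` i.
  elim: s => [|i s IH] sDx; first by exists 0 => i; rewrite in_nil.
  have [M1 RM1] := DR i (sDx i (mem_head _ _)).1 (sDx i (mem_head _ _)).2.
  have [M2 RM2] : exists M, forall j, j \in s -> R M `<=` j.
    by apply: IH => j js; apply: sDx; rewrite inE js orbT.
  exists (maxn M1 M2) => j; rewrite inE => /orP [/eqP ->|js] y Ry.
    by apply: RM1; exact: Rdecr (leq_maxl _ _) _ Ry.
  by apply: RM2 js _ _; exact: Rdecr (leq_maxr _ _) _ Ry.
have [M RM] := nested (finmap.enum_fset F) (fun i iF => conj (set_mem (FD i iF)) (Fx i iF)).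
by exists M => y Ry i iF; exact: RM _ iF _ Ry.
Qed.

Lemma continuous_open_nbhs {S T : topologicalType} (f : S -> T) :
    (forall x V, open V -> V (f x) -> exists2 U, open U /\ U x & forall y, U y -> V (f y)) ->
  continuous f.
Proof.
move=> fopen x V; rewrite nbhsE => -[B [oB Bfx] BV].
have [U [oU Ux] UB] := fopen x B oB Bfx.
by apply: (@filterS _ _ _ U); [move=> y /UB /BV|exact: open_nbhs_nbhs].
Qed.

(* [G] as a [choiceType] (classically), so that [finite_set Q] yields an [{fset _}]. *)
Definition gchoice (G : grp) : Type := G.
HB.instance Definition _ (G : grp) := gen_eqMixin (gchoice G).
HB.instance Definition _ (G : grp) := gen_choiceMixin (gchoice G).

Section PointwiseTopology.
Context {G : grp} {Q : set G}.
Hypotheses (Qfin : finite_set Q) (Qgen : generates Q).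
Local Infix "**" := (@gmul G) (at level 40, left associativity).

Lemma agree_nbhs (K : Ind G) k : nbhs K [set f : Ind G | agree Q k f K].
Proof.
have [F QF] := (@finite_fsetP (gchoice G) Q).1 Qfin.
pose on_words j c := [set f : Ind G | forall w, word_in Q w -> size w <= j ->
  f (prodw w ** c) = K (prodw w ** c)].
suff words j c : nbhs K (on_words j c).
  apply: filterS _ (words k (gone G)) => f fK d dk.
  have [[w [Qw [wd <-]]] _] := wlenP Qgen d.
  by rewrite -[prodw w]gmulg1 fK // wd.
elim: j c => [|j IH] c.
  by apply: filterS _ (ptws_nbhs_eval K (gone G ** c)) => f fK [|q w] Qw.
have next := @filter_bigI _ _ F (fun q => on_words j (q ** c)) _ (nbhs_filter K)
  (fun q _ => IH (q ** c)).
apply: filterS _ (filterI (ptws_nbhs_eval K (gone G ** c)) next) => f [f1 fq] w.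
case/lastP: w => [_ _|w q]; first exact: f1.
rewrite -cats1 size_cat addn1 ltnS => /word_in_cat [Qw Qq] wj.
rewrite prodw_cat /= gmulg1 -gmulA; apply: fq => //.
by rewrite -QF; apply: Qq; left.
Qed.

Lemma agree_open (K : Ind G) k : open [set f : Ind G | agree Q k f K].
Proof.
rewrite openE => f fK; rewrite /interior.
suff -> : [set f : Ind G | agree Q k f K] = [set g : Ind G | agree Q k g f] by exact: agree_nbhs.
by apply/seteqP; split=> g gf; [exact: agree_trans gf (agree_sym fK)|exact: agree_trans gf fK].
Qed.

End PointwiseTopology.

Section SchreierGroupoid.
Context {G : grp} {Q : set G} {H : G -> bool}.
Hypotheses (subH : is_subgroup H) (Qsym : symmetric_set Q) (Qgen : generates Q).
Local Infix "**" := (@gmul G) (at level 40, left associativity).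
Local Notation e := (gone G).
Local Notation gmulA := (@gmulA G).
Local Notation gmul1 := (@gmul1 G).
Local Notation wlen := (wlen Q).

Definition vstab (p : G) : G -> bool := conj_sub p H.

Lemma vstab_subgroup p : is_subgroup (vstab p).
Proof. exact: conj_subgroup. Qed.

Lemma ceq_vstab a b p : ceq H (a ** p) (b ** p) = vstab p (ginv a ** b).
Proof. by rewrite /ceq /vstab /conj_sub ginvM !gmulA. Qed.

Lemma vstabM g p d : vstab (g ** p) d = vstab p (ginv g ** (d ** g)).
Proof. by rewrite /vstab /conj_sub ginvM !gmulA. Qed.

Lemma inballP n p v : inball Q H n p v <-> exists2 u, wlen u <= n & ceq H (u ** p) v.
Proof.
split=> [[w [Qw [wn uv]]]|[u un uv]].
  by exists (prodw w) => //; exact: leq_trans (wlen_word Qgen Qw) wn.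
by have [[w [Qw [wu wE]]] _] := wlenP Qgen u; exists w; rewrite wu wE.
Qed.

Lemma inball_translate {n} p {u} : wlen u <= n -> inball Q H n p (u ** p).
Proof. by move=> un; apply/inballP; exists u => //; exact: ceq_refl. Qed.

Section BallIsomorphism.
Context {n : nat} {p p' : G} {phi : G -> G}.
Hypothesis phi_vertex : forall v w, inball Q H n p v -> inball Q H n p w ->
  (ceq H v w <-> ceq H (phi v) (phi w)).
Hypothesis phi_root : ceq H (phi p) p'.
Hypothesis phi_edge : forall q v w, Q q -> inball Q H n p v -> inball Q H n p w ->
  (ceq H (q ** v) w <-> ceq H (q ** phi v) (phi w)).

Lemma ball_iso_translate {u} : wlen u <= n -> ceq H (phi (u ** p)) (u ** p').
Proof.
have [[w [Qw [<- <-]]] _] := wlenP Qgen u.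
elim: w Qw => [|q w IH] Qqw; first by rewrite /= !gmul1.
move: (Qqw) => /word_in_cons [Qq Qw] /= qwn; rewrite -!gmulA.
have wn : wlen (prodw w) <= n by apply: leq_trans (wlen_word Qgen Qw) _; lia.
have qwp : inball Q H n p (q ** (prodw w ** p)).
  by rewrite gmulA; apply: inball_translate; exact: leq_trans (wlen_word Qgen Qqw) qwn.
have /(ceq_sym subH) := (phi_edge _ _ _ Qq (inball_translate p wn) qwp).1 (ceq_refl subH _).
by move/(ceq_trans subH); apply; rewrite ceq_mull; apply: IH => //; lia.
Qed.

(* Write d = u1 q u3 with u1, u3 of length at most n: then d fixes pH iff the q-edge leaving
   u3 pH ends at u1^-1 pH, an edge of the ball that phi carries to the ball about p'H. *)
Lemma ball_iso_vstab d : wlen d <= n.*2.+1 -> vstab p d = vstab p' d.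
Proof.
have transl a b : wlen a <= n -> wlen b <= n ->
    ceq H (phi (a ** p)) (phi (b ** p)) <-> ceq H (a ** p') (b ** p').
  by move=> an bn; apply: (ceq_congr subH); exact: ball_iso_translate.
have [[w [Qw [<- <-]]] _] := wlenP Qgen d => wd.
rewrite -(cat_take_drop n w) prodw_cat in Qw *.
move: Qw => /word_in_cat [Qw1 Qw2]; set u1 := prodw (take n w).
have u1n : wlen u1 <= n.
  by apply: leq_trans (wlen_word Qgen Qw1) _; rewrite size_take; case: ifP; lia.
have e_n : wlen e <= n by rewrite wlen1.
case E: (drop n w) Qw2 => [|q w3] Qw2 /=.
  have := iff_trans (phi_vertex _ _ (inball_translate p e_n) (inball_translate p u1n))
                    (transl _ _ e_n u1n).
  by rewrite !ceq_vstab ginv1 gmul1 gmulg1 => uE; apply/idP/idP => /uE.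
move: Qw2 => /word_in_cons [Qq Qw3]; set u3 := prodw w3.
have u3n : wlen u3 <= n.
  apply: leq_trans (wlen_word Qgen Qw3) _.
  by have := size_drop n w; rewrite E /=; lia.
have u1Vn : wlen (ginv u1) <= n by apply: leq_trans (wlenV Qsym Qgen _) u1n.
have qu3 : ceq H (q ** phi (u3 ** p)) (q ** (u3 ** p')).
  by rewrite ceq_mull; exact: ball_iso_translate.
have dE := iff_trans (phi_edge _ _ _ Qq (inball_translate p u3n) (inball_translate p u1Vn))
                     (ceq_congr subH qu3 (ball_iso_translate u1Vn)).
rewrite !gmulA !ceq_vstab -!ginvM !(subgroupVE (vstab_subgroup _)) in dE.
by apply/idP/idP => /dE.
Qed.

End BallIsomorphism.

Lemma ball_iso_agree n p p' : ball_iso Q H n p p' -> agree Q n.*2.+1 (vstab p) (vstab p').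
Proof.
case=> phi [_ [phi_vertex [_ [phi_root phi_edge]]]] d.
exact: (ball_iso_vstab phi_vertex phi_root phi_edge).
Qed.

Lemma agree_ball_iso n p p' : agree Q n.*2.+1 (vstab p) (vstab p') -> ball_iso Q H n p p'.
Proof.
move=> pp'.
have transport a b : wlen a + wlen b <= n.*2.+1 ->
    ceq H (a ** p) (b ** p) <-> ceq H (a ** p') (b ** p').
  move=> ab; rewrite !ceq_vstab pp' //.
  by have := wlenM Qgen (ginv a) b; have := wlenV Qsym Qgen a; lia.
pose rep v u := wlen u <= n /\ ceq H (u ** p) v.
pose pick v := epsilon (inhabits e) (rep v).
have pickP v : inball Q H n p v -> rep v (pick v).
  by move=> /inballP [u un uv]; apply: (epsilon_spec _ (rep v)); exists u.
have pick_ceq v w : inball Q H n p v -> inball Q H n p w ->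
    ceq H v w <-> ceq H (pick v ** p') (pick w ** p').
  move=> /pickP [vn vv] /pickP [wn ww].
  apply: iff_trans (ceq_congr subH (ceq_sym subH vv) (ceq_sym subH ww)) _.
  by apply: transport; lia.
exists (fun v => pick v ** p'); split; [|split; [|split; [|split]]].
- by move=> v /pickP [vn _]; exact: inball_translate.
- exact: pick_ceq.
- move=> v' /inballP [u un uv']; exists (u ** p); split; first exact: inball_translate.
  have [pn pu] := pickP _ (inball_translate p un).
  have bound : wlen (pick (u ** p)) + wlen u <= n.*2.+1 by lia.
  exact: (ceq_trans subH ((transport _ _ bound).1 pu) uv').
- have e_n : wlen e <= n by rewrite wlen1.
  have [pn pp] : rep p (pick p).
    by apply: pickP; rewrite -[X in inball _ _ _ _ X]gmul1; exact: inball_translate.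
  have bound : wlen (pick p) + wlen e <= n.*2.+1 by lia.
  by have := (transport _ _ bound).1; rewrite !gmul1; apply.
- move=> q v w Qq /pickP [vn vv] /pickP [wn ww].
  have qv : ceq H (q ** v) ((q ** pick v) ** p).
    by rewrite -gmulA ceq_mull; exact: (ceq_sym subH vv).
  apply: iff_trans (ceq_congr subH qv (ceq_sym subH ww)) _.
  rewrite gmulA; apply: transport.
  by have := wlenM Qgen q (pick v); have := wlen_gen Qgen Qq; lia.
Qed.

Lemma bcls_agree n p : bcls Q H n p = [set r | agree Q n.*2.+1 (vstab p) (vstab r)].
Proof. by apply/seteqP; split=> r /=; [exact: ball_iso_agree|exact: agree_ball_iso]. Qed.

Lemma bcls_eq n p r : bcls Q H n p = bcls Q H n r <-> agree Q n.*2.+1 (vstab p) (vstab r).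
Proof.
rewrite !bcls_agree; split=> [pr|pr].
  by have : [set s | agree Q n.*2.+1 (vstab r) (vstab s)] r by []; rewrite -pr.
by apply/seteqP; split=> s /=; [apply: agree_trans (agree_sym pr)|apply: agree_trans pr].
Qed.

Local Notation X := (GH0 G Q H).

Lemma xs_xrep (x : X) n : xs x n = bcls Q H n (xrep x n).
Proof.
have [p [_ xn]] := @xs_ok _ _ _ x n.
exact: (epsilon_spec _ (fun p => xs x n = bcls Q H n p) (ex_intro _ p xn)).
Qed.

Lemma xrep_agreeS (x : X) n : agree Q n.*2.+1 (vstab (xrep x n.+1)) (vstab (xrep x n)).
Proof.
have [p [xn1 xn]] := @xs_ok _ _ _ x n.
have /bcls_eq a1 : bcls Q H n.+1 (xrep x n.+1) = bcls Q H n.+1 p by rewrite -xs_xrep.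
have /bcls_eq a0 : bcls Q H n (xrep x n) = bcls Q H n p by rewrite -xs_xrep.
by apply: agree_trans (agree_le _ a1) (agree_sym a0); lia.
Qed.

Lemma xrep_agree (x : X) {n m} : n <= m -> agree Q n.*2.+1 (vstab (xrep x m)) (vstab (xrep x n)).
Proof.
elim: m => [|m IH]; first by rewrite leqn0 => /eqP ->.
rewrite leq_eqVlt ltnS => /orP [/eqP ->//|nm].
by apply: agree_trans (agree_le _ (xrep_agreeS x m)) (IH nm); lia.
Qed.

(* By [xrep_agree], any level n with wlen d <= 2n+1 gives the same answer. *)
Definition stab (x : X) : G -> bool := fun d => vstab (xrep x (wlen d)) d.

Lemma stab_agree (x : X) n : agree Q n.*2.+1 (stab x) (vstab (xrep x n)).
Proof.
move=> d dn; rewrite /stab -(xrep_agree x (leq_maxr n (wlen d))); last lia.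
by rewrite (xrep_agree x (leq_maxl n (wlen d))).
Qed.

Lemma xs_bcls (x : X) n r : xs x n = bcls Q H n r <-> agree Q n.*2.+1 (stab x) (vstab r).
Proof.
rewrite xs_xrep bcls_eq; split=> [xr|sr]; first exact: agree_trans (stab_agree x n) xr.
exact: agree_trans (agree_sym (stab_agree x n)) sr.
Qed.

Lemma xs_eq (x y : X) n : xs x n = xs y n <-> agree Q n.*2.+1 (stab x) (stab y).
Proof.
rewrite [xs y n]xs_xrep xs_bcls; split=> sxy.
  exact: agree_trans sxy (agree_sym (stab_agree y n)).
exact: agree_trans sxy (stab_agree y n).
Qed.

Lemma stab_inj : injective stab.
Proof.
case=> [f fP] [f' f'P] sff'.
have ff' : f = f' by apply/funext => n; apply/(xs_eq (MkGH0 f fP) (MkGH0 f' f'P)); rewrite sff'.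
by subst f'; congr MkGH0; exact: Prop_irrelevance.
Qed.

Lemma stab_subgroup (x : X) : is_subgroup (stab x).
Proof.
split; first exact: subgroup1 (vstab_subgroup _).
move=> a b sa sb; pose n := wlen a + wlen b.
have an : wlen a <= n.*2.+1 by lia.
have bn : wlen b <= n.*2.+1 by lia.
have abn : wlen (a ** ginv b) <= n.*2.+1.
  by have := wlenM Qgen a (ginv b); have := wlenV Qsym Qgen b; lia.
move: sa sb; rewrite !(stab_agree x n) //.
exact: (vstab_subgroup _).2.
Qed.

Lemma xs_gact g (x : X) n : xs (gact g x) n = bcls Q H n (g ** xrep x (n + wlen g)).
Proof.
rewrite /gact /toGH0; case: pselect => [//|nP]; exfalso; apply: nP => m.
exists (g ** xrep x (m.+1 + wlen g)); split=> //; apply/bcls_eq => d dm; rewrite !vstabM.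
have le : m + wlen g <= m.+1 + wlen g by lia.
apply/esym/(xrep_agree x le); by have := wlenJ Qsym Qgen g d; lia.
Qed.

Lemma stab_gact g (x : X) : stab (gact g x) = conj_sub g (stab x).
Proof.
apply/funext => d; pose n := wlen d.
have /xs_bcls gx := xs_gact g x n.
rewrite gx; last lia.
rewrite vstabM /conj_sub (stab_agree x (n + wlen g)) //.
by have := wlenJ Qsym Qgen g d; lia.
Qed.

Lemma gact_eq g h (x : X) : stab x (ginv g ** h) -> gact g x = gact h x.
Proof.
move=> gh; apply: stab_inj; rewrite !stab_gact; apply/funext => d; rewrite /conj_sub.
have -> : ginv h ** (d ** h) = ginv (ginv g ** h) ** ((ginv g ** (d ** g)) ** (ginv g ** h)).
  by rewrite ginvM ginvK !gmulA !gmulgK.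
by rewrite (subgroupJ (stab_subgroup x) _ _ gh).
Qed.

Lemma gact1 (x : X) : gact e x = x.
Proof.
by apply: stab_inj; rewrite stab_gact; apply/funext => d; rewrite /conj_sub ginv1 gmul1 gmulg1.
Qed.

Lemma gactM g h (x : X) : gact (h ** g) x = gact h (gact g x).
Proof.
by apply: stab_inj; rewrite !stab_gact; apply/funext => d; rewrite /conj_sub ginvM !gmulA.
Qed.

Local Notation A := (GH G Q H).

Lemma GH_ext (a b : A) : aset a = aset b -> a = b.
Proof. by case: a b => S SP [S' S'P] /= SS'; subst S'; congr MkGH; exact: Prop_irrelevance. Qed.

Lemma arr_relE (x : X) g y h : arr_rel (x, g) (y, h) <-> x = y /\ stab x (ginv g ** h).
Proof.
have near_stab n : wlen (ginv g ** h) <= n ->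
    ceq H (g ** xrep x n) (h ** xrep x n) = stab x (ginv g ** h).
  by move=> gh; rewrite ceq_vstab (stab_agree x n) //; lia.
split=> [[/= <- [N gh]]|[<- gh]]; split=> //=.
  by rewrite -(near_stab (maxn N (wlen (ginv g ** h)))) ?leq_maxr //; apply/gh/leq_maxl.
by exists (wlen (ginv g ** h)) => n gh_n; rewrite near_stab.
Qed.

Lemma acls_eq (x : X) g y h : acls (x, g) = acls (y, h) <-> x = y /\ stab x (ginv g ** h).
Proof.
split=> [xgyh|[<- gh]].
  have : aset (acls (y, h)) (y, h).
    by apply/arr_relE; split=> //; rewrite gmulV; exact: subgroup1 (stab_subgroup y).
  by rewrite -xgyh => /arr_relE.
apply: GH_ext => /=; apply/funext => -[z f]; apply/propext; rewrite !arr_relE.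
split=> [[<- gf]|[<- hf]]; split=> //.
  exact: (ceq_trans (stab_subgroup x) (ceq_sym (stab_subgroup x) gh) gf).
exact: (ceq_trans (stab_subgroup x) gh hf).
Qed.

Lemma acls_arep (a : A) : acls (arep a) = a.
Proof.
apply: GH_ext; case: a => S [a0 Sa0] /=; rewrite /arep /=.
by apply/esym; apply: (epsilon_spec _ (fun a => S = arr_rel a)); exists a0.
Qed.

Lemma aclsP (a : A) : exists x g, a = acls (x, g).
Proof. by exists (arep a).1, (arep a).2; rewrite -surjective_pairing acls_arep. Qed.

Lemma arep_acls (x : X) g :
  (arep (acls (x, g))).1 = x /\ stab x (ginv g ** (arep (acls (x, g))).2).
Proof.
case E: (arep (acls (x, g))) => [y h] /=.
by have := acls_arep (acls (x, g)); rewrite E => /esym /acls_eq [<-].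
Qed.

Lemma GH_r_acls (x : X) g : GH_r (acls (x, g)) = x.
Proof. by rewrite /GH_r; case: (arep_acls x g). Qed.

Lemma GH_s_acls (x : X) g : GH_s (acls (x, g)) = gact g x.
Proof. by rewrite /GH_s; case: (arep_acls x g) => -> /gact_eq. Qed.

Lemma GH_inv_acls (x : X) g : GH_inv (acls (x, g)) = acls (gact g x, ginv g).
Proof.
rewrite /GH_inv GH_s_acls; case: (arep_acls x g) => _ gg'.
by apply/acls_eq; split=> //; rewrite stab_gact /conj_sub ginvK gmulgKV.
Qed.

Lemma GH_mul_acls (x : X) g h :
  GH_mul (acls (x, g)) (acls (gact g x, h)) = acls (x, h ** g).
Proof.
rewrite /GH_mul GH_r_acls; case: (arep_acls x g) => _ gg'.
case: (arep_acls (gact g x) h) => _; rewrite stab_gact /conj_sub => hh'.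
apply/acls_eq; split=> //.
set g' := (arep _).2 in gg' *; set h' := (arep _).2 in hh' *.
rewrite -(subgroupVE (stab_subgroup x)) ginvM ginvK.
have -> : ginv (h ** g) ** (h' ** g') = (ginv g ** ((ginv h ** h') ** g)) ** (ginv g ** g').
  by rewrite ginvM !gmulA gmulgK.
exact: (subgroupM (stab_subgroup x) hh' gg').
Qed.

(* The cylinder {y | y_M = x_M} (see [cyl_open]). *)
Definition cyl (x : X) M := [set y : X | agree Q M.*2.+1 (stab y) (stab x)].

Lemma cyl_refl (x : X) M : cyl x M x. Proof. exact: agree_refl. Qed.

Lemma cyl_le (x : X) m n : m <= n -> cyl x n `<=` cyl x m.
Proof. by move=> mn y; apply: agree_le; lia. Qed.

Lemma cyl_open (x : X) M : open (cyl x M).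
Proof.
have -> : cyl x M = [set y | xs y M = xs x M] by apply/seteqP; split=> y /xs_eq.
exists [set [set y | xs y M = xs x M]]; last by rewrite bigcup_set1.
move=> _ ->; apply: finI_from1; exists M, (xs x M); split=> //.
by exists (xrep x M); exact: xs_xrep.
Qed.

Lemma cyl_base {U : set X} {x : X} : open U -> U x -> exists M, cyl x M `<=` U.
Proof.
case=> B BD <- [V BV Vx].
have [M MV] : exists M, cyl x M `<=` V.
  apply: finI_from_nested (BD _ BV) Vx; first exact: cyl_le.
  by move=> _ [N [c [_ ->]]] /= xN; exists N => y /xs_eq; rewrite xN.
by exists M => y /MV Vy; exists V.
Qed.

Lemma stab_continuous : continuous (stab : X -> Ind G).
Proof.
move=> x; apply: (ptws_cvg (fmap_filter _ (nbhs_filter x))) => d; rewrite /= nbhs_simpl /=.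
apply: filterS _ (open_nbhs_nbhs (conj (cyl_open x (wlen d)) (cyl_refl x _))).
by move=> y; apply; lia.
Qed.

Definition ucyl M (x : X) g := [set a : A | exists y, a = acls (y, g) /\ cyl x M y].

Lemma ucyl_refl M (x : X) g : ucyl M x g (acls (x, g)).
Proof. by exists x; split=> //; exact: cyl_refl. Qed.

Lemma ucyl_open M (x : X) g : wlen g <= M -> open (ucyl M x g).
Proof.
move=> gM; pose U := [set a : A | exists y, a = acls (y, g) /\ xs y M = xs x M].
have -> : ucyl M x g = U.
  by apply/seteqP; split=> a [y [-> xy]]; exists y; split=> //; apply/xs_eq.
exists [set U]; last by rewrite bigcup_set1.
move=> _ ->; apply: finI_from1; exists M, (xs x M), g; split=> //.
by exists (xrep x M); exact: xs_xrep.
Qed.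

Lemma ucyl_base {V : set A} {x : X} {g} : open V -> V (acls (x, g)) ->
  exists M, forall y, cyl x M y -> V (acls (y, g)).
Proof.
case=> B BD <- [W BW Wxg].
have [M MW] : exists M, ucyl M x g `<=` W.
  apply: finI_from_nested (BD _ BW) Wxg.
    by move=> m n mn a [y [-> xy]]; exists y; split=> //; exact: cyl_le mn _ xy.
  move=> _ [N [c [g' [_ [g'N ->]]]]] /= [z [/acls_eq [<- gg'] zc]].
  exists (N + wlen g) => _ [y [-> xy]]; exists y; split.
    apply/acls_eq; split=> //; rewrite xy //.
    by have := wlenM Qgen (ginv g) g'; have := wlenV Qsym Qgen g; lia.
  by rewrite -zc; apply/xs_eq; apply: agree_le xy; lia.
by exists M => y xy; exists W => //; apply: MW; exists y.
Qed.

Lemma cyl_gact (x y : X) g M : cyl x (M + wlen g) y -> cyl (gact g x) M (gact g y).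
Proof.
move=> xy d dM; rewrite !stab_gact /conj_sub; apply: xy.
by have := wlenJ Qsym Qgen g d; lia.
Qed.

Lemma ucyl_near {P : set A} (x : X) g M : (forall y, cyl x M y -> P (acls (y, g))) ->
  exists2 U, open U /\ U (acls (x, g)) & forall b, U b -> P b.
Proof.
move=> MP; exists (ucyl (maxn M (wlen g)) x g).
  by split; [apply/ucyl_open/leq_maxr|exact: ucyl_refl].
by move=> _ [y [-> xy]]; apply: MP; exact: cyl_le (leq_maxl _ _) _ xy.
Qed.

Lemma GH_r_continuous : continuous (@GH_r G Q H).
Proof.
apply: continuous_open_nbhs => a V oV; case: (aclsP a) => x [g ->]; rewrite GH_r_acls => Vx.
have [M MV] := cyl_base oV Vx.
by apply: (ucyl_near _ _ M) => y /MV; rewrite GH_r_acls.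
Qed.

Lemma GH_s_continuous : continuous (@GH_s G Q H).
Proof.
apply: continuous_open_nbhs => a V oV; case: (aclsP a) => x [g ->]; rewrite GH_s_acls => Vx.
have [M MV] := cyl_base oV Vx.
by apply: (ucyl_near _ _ (M + wlen g)) => y /cyl_gact /MV; rewrite GH_s_acls.
Qed.

Lemma GH_u_continuous : continuous (@GH_u G Q H).
Proof.
apply: continuous_open_nbhs => x V oV Vx.
have [M MV] := ucyl_base oV Vx.
by exists (cyl x M); [split; [exact: cyl_open|exact: cyl_refl]|].
Qed.

Lemma GH_inv_continuous : continuous (@GH_inv G Q H).
Proof.
apply: continuous_open_nbhs => a V oV; case: (aclsP a) => x [g ->]; rewrite GH_inv_acls => Va.
have [M MV] := ucyl_base oV Va.
by apply: (ucyl_near _ _ (M + wlen g)) => y /cyl_gact /MV; rewrite GH_inv_acls.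
Qed.

Lemma GH_mul_continuous : {within [set ab : A * A | GH_s ab.1 = GH_r ab.2],
  continuous (fun ab : A * A => GH_mul ab.1 ab.2)}.
Proof.
apply/subspace_continuousP => -[a b] /=.
case: (aclsP a) => x [g ->]; case: (aclsP b) => y [h ->].
rewrite GH_s_acls GH_r_acls => <-; rewrite /from_subspace /= GH_mul_acls => V.
rewrite nbhsE => -[B [oB Bx] BV]; have [M MB] := ucyl_base oB Bx.
rewrite /= nbhs_simpl /=.
exists (ucyl (maxn M (wlen g)) x g, ucyl (wlen h) (gact g x) h).
  split; apply: open_nbhs_nbhs; (split; [apply: ucyl_open|exact: ucyl_refl]) => //.
  exact: leq_maxr.
move=> [_ _] /= [[z [-> xz]] [z' [-> _]]].
rewrite GH_s_acls GH_r_acls => <-; apply: BV; rewrite GH_mul_acls; apply: MB.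
exact: cyl_le (leq_maxl _ _) _ xz.
Qed.

Lemma GH_topological_groupoid :
  topological_groupoid (@GH_r G Q H) GH_s GH_u GH_inv GH_mul.
Proof.
split; first by move=> x; rewrite /GH_u GH_r_acls GH_s_acls gact1.
split.
  move=> a b; case: (aclsP a) => x [g ->]; case: (aclsP b) => y [h ->].
  by rewrite GH_s_acls GH_r_acls => <-; rewrite GH_mul_acls !GH_r_acls !GH_s_acls gactM.
split.
  move=> a b c; case: (aclsP a) => x [g ->]; case: (aclsP b) => y [h ->].
  case: (aclsP c) => z [k ->]; rewrite !GH_s_acls !GH_r_acls => <- <-.
  by rewrite GH_mul_acls (GH_mul_acls (gact g x)) -gactM !GH_mul_acls gmulA.
split.
  move=> a; case: (aclsP a) => x [g ->]; rewrite GH_r_acls GH_s_acls /GH_u.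
  split; last by rewrite GH_mul_acls gmul1.
  by have := GH_mul_acls x (gone G) g; rewrite gact1 gmulg1.
split.
  move=> a; case: (aclsP a) => x [g ->]; rewrite GH_inv_acls !GH_r_acls !GH_s_acls.
  rewrite -gactM gmulV gact1 GH_mul_acls gmulV; do 3!split=> //.
  by have := GH_mul_acls (gact g x) (ginv g) g; rewrite -gactM gmulV gact1 gmulgV.
split; first exact: GH_r_continuous.
split; first exact: GH_s_continuous.
split; first exact: GH_u_continuous.
split; first exact: GH_inv_continuous.
exact: GH_mul_continuous.
Qed.

Lemma GH_r_local_homeo : local_homeo (@GH_r G Q H).
Proof.
move=> a; case: (aclsP a) => x [g ->]; pose M := wlen g.
have r_ucyl : GH_r @` ucyl M x g = cyl x M.
  apply/seteqP; split=> [_ [_ [y [-> xy]] <-]|y xy]; first by rewrite GH_r_acls.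
  by exists (acls (y, g)); [exists y|rewrite GH_r_acls].
exists (ucyl M x g); split; first exact: ucyl_open.
split; first exact: ucyl_refl.
split; first by rewrite r_ucyl; exact: cyl_open.
split; first by move=> _ _ [y [-> _]] [y' [-> _]]; rewrite !GH_r_acls => ->.
split; first exact: continuous_subspaceT GH_r_continuous.
move=> V oV VU; rewrite openE => _ [b Vb <-].
have [y [bE _]] := VU b Vb; subst b; rewrite GH_r_acls.
have [N NV] := ucyl_base oV Vb.
apply: filterS _ (open_nbhs_nbhs (conj (cyl_open y N) (cyl_refl y N))) => z yz.
by exists (acls (z, g)); [exact: NV|exact: GH_r_acls].
Qed.

Lemma stab_separates (x y : X) : x <> y -> exists d, stab x d <> stab y d.
Proof.
move=> xy; apply: contra_notP xy => /forallNP sxy; apply: stab_inj.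
by apply/funext => d; apply: contra_notP (sxy d).
Qed.

Lemma cyl_closed (x : X) M : closed (cyl x M).
Proof.
rewrite -[cyl x M]setCK; apply: open_closedC; rewrite openE => y nxy.
apply: filterS _ (open_nbhs_nbhs (conj (cyl_open y M) (cyl_refl y M))) => z yz zx.
by apply: nxy; exact: agree_trans (agree_sym yz) zx.
Qed.

Lemma GH0_totally_disconnected : totally_disconnected [set: X].
Proof.
apply: zero_dimension_totally_disconnected => x y /eqP /stab_separates [d xy].
exists (cyl x (wlen d)); split; [split; [exact: cyl_open|exact: cyl_closed]|exact: cyl_refl|].
by move=> yx; apply: xy; rewrite yx //; lia.
Qed.

Lemma GH_hausdorff : hausdorff_space A.
Proof.
rewrite open_hausdorff => a b /eqP ab.
case: (aclsP a) ab => x [g ->]; case: (aclsP b) => y [h ->] ab.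
have [N xyN] : exists N, x <> y -> ~ agree Q N.*2.+1 (stab x) (stab y).
  have [->|/stab_separates [d xy]] := pselect (x = y); first by exists 0.
  by exists (wlen d) => _ xyN; apply: xy; apply: xyN; lia.
pose M := maxn (maxn (wlen g) (wlen h)) (maxn N (wlen (ginv g ** h))).
exists (ucyl M x g, ucyl M y h); first by split; rewrite in_setE; exact: ucyl_refl.
split; [apply: ucyl_open; lia|apply: ucyl_open; lia|].
apply/eqP/seteqP; split=> // _ [[z [-> xz]] [z' [/acls_eq [<- gh] yz]]].
have xyM : agree Q M.*2.+1 (stab x) (stab y) := agree_trans (agree_sym xz) yz.
have [xy|nxy] := pselect (x = y); last by apply: (xyN nxy); apply: agree_le xyM; lia.
subst y; apply: ab; apply/acls_eq; split=> //.
by rewrite -xz //; lia.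
Qed.

Hypothesis Qfin : finite_set Q.
Context {Z : set (Ind G)}.
Hypotheses (ZU : URS Z) (ZH : Z H).

Lemma URS_conj_agree {K K' : Ind G} k : Z K -> Z K' -> exists g, agree Q k (conj_sub g K) K'.
Proof.
move=> ZK ZK'; have [_ [_ [_ [_ Zdense]]]] := ZU.
by have [_ [[g _ <-] gK]] := Zdense K ZK K' ZK' _ (agree_nbhs Qfin Qgen K' k); exists g.
Qed.

Lemma stab_Z (x : X) : Z (stab x).
Proof.
have [_ [_ [[C [cC ZE]] [ZJ _]]]] := ZU.
rewrite ZE; split; last exact: stab_subgroup.
apply: (@closed_cvg _ _ \oo eventually_filter (fun n => vstab (xrep x n) : Ind G) C cC).
  by apply: nearW => n; have := ZJ (xrep x n) H ZH; rewrite ZE => -[].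
apply: (ptws_cvg (fmap_filter _ eventually_filter)) => d.
by exists (wlen d) => // n /= dn; rewrite (stab_agree x n) //; lia.
Qed.

(* Since the orbit of H is dense in Z, some r_n H r_n^-1 agrees with K on the ball of radius
   2n+3; the classes [r_n]_n are then compatible and form the required point. *)
Lemma stab_onto {K : Ind G} : Z K -> exists x : X, stab x = K.
Proof.
move=> ZK; pose close n g := agree Q n.+1.*2.+1 (vstab g) K.
pose r n := epsilon (inhabits (gone G)) (close n).
have rK n : close n (r n) by apply: (epsilon_spec _ (close n)); exact: URS_conj_agree ZH ZK.
have rP n : exists p, bcls Q H n.+1 (r n.+1) = bcls Q H n.+1 p /\ bcls Q H n (r n) = bcls Q H n p.
  exists (r n.+1); split=> //; apply/bcls_eq.
  by apply: agree_trans (agree_le _ (rK n)) (agree_sym (agree_le _ (rK n.+1))); lia.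
exists (MkGH0 (fun n => bcls Q H n (r n)) rP); apply/funext => d.
have /xs_bcls xr := erefl (xs (MkGH0 _ rP) (wlen d)).
by rewrite xr; [apply: rK|]; lia.
Qed.

Lemma stab_open (U : set X) : open U ->
  exists V : set (Ind G), open V /\ stab @` U = V `&` Z.
Proof.
move=> oU.
exists [set f : Ind G | exists x M, [/\ U x, cyl x M `<=` U & agree Q M.*2.+1 f (stab x)]].
split.
  rewrite openE => f [x [M [Ux xMU fx]]]; rewrite /interior.
  apply: filterS _ (open_nbhs_nbhs (conj (agree_open Qfin Qgen (stab x) M.*2.+1) fx)).
  by move=> g gx; exists x, M.
apply/seteqP; split=> [_ [x Ux <-]|f [[x [M [Ux xMU fx]]] Zf]].
  split; last exact: stab_Z.
  have [M xMU] := cyl_base oU Ux.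
  by exists x, M; split=> //; exact: agree_refl.
have [y yf] := stab_onto Zf; exists y => //.
by apply: xMU; rewrite /cyl /= yf.
Qed.

Lemma GH_minimal : minimal_groupoid (@GH_r G Q H) GH_s.
Proof.
move=> x; apply/seteqP; split=> // y _ B; rewrite nbhsE => -[B' [oB' yB'] B'B].
have [M yMB'] := cyl_base oB' yB'.
have [g xy] := URS_conj_agree M.*2.+1 (stab_Z x) (stab_Z y).
exists (gact g x); split.
  by exists (acls (x, g)); [exact: GH_r_acls|exact: GH_s_acls].
by apply/B'B/yMB'; rewrite /cyl /= stab_gact.
Qed.

Lemma GH0_homeomorphic_Z : homeomorphic_to_subspace X (Ind G) Z.
Proof.
exists (stab : X -> Ind G); split; first exact: stab_inj.
split; last by split; [exact: stab_continuous|exact: stab_open].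
apply/seteqP; split=> [_ [x _ <-]|K /stab_onto [x <-]]; first exact: stab_Z.
by exists x.
Qed.

End SchreierGroupoid.

Theorem proposition3p1 (G : grp) (Q : set G) (Z : set (Ind G)) (H : Ind G) :
  finite_set Q -> symmetric_set Q -> generates Q ->
  URS Z -> Z H ->
  ample_groupoid (@GH_r G Q H) (@GH_s G Q H) (@GH_u G Q H)
                 (@GH_inv G Q H) (@GH_mul G Q H) /\
  minimal_groupoid (@GH_r G Q H) (@GH_s G Q H) /\
  hausdorff_space (GH G Q H) /\
  homeomorphic_to_subspace (GH0 G Q H) (Ind G) Z.
Proof.
move=> Qfin Qsym Qgen ZU ZH.
have subH : is_subgroup H by case: ZU => _ [ZSub _]; exact: ZSub.
split; last split; last split.
- split; first split.
  + exact: (GH_topological_groupoid subH Qsym Qgen).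
  + exact: (GH_r_local_homeo subH Qsym Qgen).
  + exact: (GH0_totally_disconnected subH Qsym Qgen).
- exact: (GH_minimal subH Qsym Qgen Qfin ZU ZH).
- exact: (GH_hausdorff subH Qsym Qgen).
- exact: (GH0_homeomorphic_Z subH Qsym Qgen Qfin ZU ZH).
Qed.
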